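(* Let $A$ be a CF algorithm that is IPF stable at $x\in\mathcal X$. Then for every effort level $u\in[0,1]$ and every maximum number of iterations $T\in\mathbb N$, $$\mathbb E_{\vec x\sim \xi(x,u,T,m,A)}\big[c(\vec x)\big]\le c\big(x,A(x)\big).$$
   Context: Input space $\mathcal X=\mathcal X_1\times\cdots\times\mathcal X_D$, where each feature $d$ is either categorical ($\mathcal X_d$ a finite set) or numerical ($\mathcal X_d\subseteq\mathbb R$). A model is a function $m:\mathcal X\to[0,1]$; $m(x)\ge 0.5$ is a positive prediction. Cost: $c(x,x')=\sum_{d=1}^D c_d(x_d,x'_d)$ with $c_d(x_d,x'_d)=\mathbb 1\{x_d\neq x'_d\}$ for categorical $d$ and $c_d(x_d,x'_d)=|F_d(x_d)-F_d(x'_d)|$ for numerical $d$, where $F_d$ is a fixed cumulative distribution function (nondecreasing) of feature $d$. For a sequence $\vec x=(x^{(1)},\dots,x^{(N)})$, $c(\vec x)=\sum_{n=1}^{N-1}c(x^{(n)},x^{(n+1)})$. A CF algorithm $A$ maps each $x\in\mathcal X$ to a probability distribution over $\mathcal X$ ($x'\sim A(x)$); $A$ is deterministic at $x$ if this distribution is a point mass, in which case we write $A(x)$ for that point. $u$-partial fulfillment: for current state $x$, goal $x'$, $u\in[0,1]$ and a fixed $\epsilon\ge 0$, the random state $w\sim\phi(x,x',u)$ is obtained featurewise: for numerical $d$, $w_d=(1-u)x_d+ux'_d$, except $w_d=x'_d$ if $|x_d-x'_d|\le\epsilon$; for categorical $d$, independently, $w_d=x'_d$ with probability $u$ and $w_d=x_d$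 with probability $1-u$. IPF process: start with $\vec x=[x]$, $t=0$; while $m(x)<0.5$ and $t<T$: draw $x'\sim A(x)$, draw new $x\sim\phi(x,x',u)$, append $x$ to $\vec x$, increment $t$; output $\vec x$. $\xi(x,u,T,m,A)$ denotes the distribution of the output $\vec x$. $\Phi(x,x')$ denotes the set of all $w\in\mathcal X$ such that for each numerical $d$, $w_d$ lies in the closed interval between $x_d$ and $x'_d$, and for each categorical $d$, $w_d\in\{x_d,x'_d\}$ (the set of possible (iterated) partial fulfillments from $x$ towards $x'$). IPF stable: $A$ is IPF stable at $x$ if (1) $A$ is deterministic at $x$, and (2) for all $w\in\Phi(x,A(x))$, $A$ is deterministic at $w$ and $A(w)=A(x)$. $A$ is IPF stable globally if it is IPF stable at every $x\in\mathcal X$. *)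

From HB Require Import structures.
From mathcomp Require Import all_boot all_order all_algebra.

Set Implicit Arguments.
Unset Strict Implicit.
Unset Printing Implicit Defensive.

Import Order.TTheory GRing.Theory Num.Theory.
From mathcomp Require Import all_classical all_reals all_analysis.
Import numFieldNormedType.Exports.
Local Open Scope classical_set_scope.
Local Open Scope ring_scope.

(* Ambient space.  A point of X = X_1 x ... x X_D is encoded as a function  *)
(* 'I_D -> R; feature d takes its values in dom d : set R (    *)
(* categorical features are encoded by a finite set of real labels).        *)
Definition pt (R : realType) (D : nat) := 'I_D -> R.
HB.instance Definition _ (R : realType) (D : nat) := gen_eqMixin (pt R D).
HB.instance Definition _ (R : realType) (D : nat) := gen_choiceMixin (pt R D).
HB.instance Definition _ (R : realType) (D : nat) :=
  isPointed.Build (pt R D) (fun _ => 0%R).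

(* generators of the product Borel sigma-algebra: coordinate preimages *)
Definition coord_gen (R : realType) (D : nat) : set (set (pt R D)) :=
  [set S | exists (d : 'I_D) (B : set R), measurable B /\ S = (fun x => x d) @^-1` B].

Definition Xspace (R : realType) (D : nat) := g_sigma_algebraType (@coord_gen R D).

Definition inX (R : realType) (D : nat) (dom : 'I_D -> set R) : set (Xspace R D) :=
  [set x | forall d, dom d (x d)].

Definition is_cdf (R : realType) (F : R -> R) : Prop :=
  [/\ {homo F : s t / s <= t},
      (forall s : R, F @ at_right s --> F s),
      F @ -oo --> (0:R) &
      F @ +oo --> (1:R)].

Definition cost_d (R : realType) (D : nat) (iscat : 'I_D -> bool)
    (F : 'I_D -> R -> R) (d : 'I_D) (s t : R) : R :=
  if iscat d then (s != t)%:R else `|F d s - F d t|.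

Definition cost (R : realType) (D : nat) (iscat : 'I_D -> bool)
    (F : 'I_D -> R -> R) (x y : Xspace R D) : R :=
  \sum_(d < D) cost_d iscat F d (x d) (y d).

Fixpoint seq_cost (R : realType) (D : nat) (iscat : 'I_D -> bool)
    (F : 'I_D -> R -> R) (s : seq (Xspace R D)) : R :=
  match s with
  | x :: ((y :: _) as s') => cost iscat F x y + seq_cost iscat F s'
  | _ => 0
  end.

(* u-partial fulfillment phi(x, x', u).  Its law is the finite mixture      *)
(* over S, the set of categorical features that are switched to x'_d:       *)
(* outcome  phi_pt x x' S  with probability  phi_w S  (independent          *)
(* Bernoulli(u) choices on the categorical features).                       *)
Definition cat_set (D : nat) (iscat : 'I_D -> bool) : {set 'I_D} :=
  [set d | iscat d].

Definition phi_pt (R : realType) (D : nat) (iscat : 'I_D -> bool) (eps u : R)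
    (x x' : Xspace R D) (S : {set 'I_D}) : Xspace R D :=
  fun d => if iscat d then (if d \in S then x' d else x d)
           else if `|x d - x' d| <= eps then x' d
           else (1 - u) * x d + u * x' d.

Definition phi_w (R : realType) (D : nat) (iscat : 'I_D -> bool) (u : R)
    (S : {set 'I_D}) : R :=
  u ^+ #|S| * (1 - u) ^+ (#|cat_set iscat| - #|S|).

(* xi_expect u T m A x G is the expectation of the (nonnegative) functional *)
(* G of the output sequence  vec x ~ xi(x, u, T, m, A)  (the law of the    *)
(* IPF process, defined as iterated integration / finite sums).             *)
Fixpoint xi_expect (R : realType) (D : nat) (iscat : 'I_D -> bool) (eps u : R)
    (m : Xspace R D -> R) (A : Xspace R D -> probability (Xspace R D) R)
    (T : nat) (x : Xspace R D) (G : seq (Xspace R D) -> \bar R) {struct T}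
    : \bar R :=
  match T with
  | 0 => G [:: x]
  | T'.+1 =>
      if m x < 2^-1 then
        (\int[A x]_(x' in setT)
           \sum_(S in {set 'I_D} | S \subset cat_set iscat)
              ((phi_w iscat u S)%:E *
               xi_expect iscat eps u m A T' (phi_pt iscat eps u x x' S)
                         (fun s => G (x :: s))))%E
      else G [:: x]
  end.

Definition det_at (R : realType) (D : nat)
    (A : Xspace R D -> probability (Xspace R D) R) (x a : Xspace R D) : Prop :=
  forall S : set (Xspace R D), measurable S -> A x S = @dirac _ _ a R S.

(* Phi(x, x') : possible iterated partial fulfillments (within X) *)
Definition Phi (R : realType) (D : nat) (iscat : 'I_D -> bool)
    (dom : 'I_D -> set R) (x x' : Xspace R D) : set (Xspace R D) :=
  [set w | inX dom w /\
     forall d, if iscat d then (w d = x d \/ w d = x' d)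
               else (Num.min (x d) (x' d) <= w d <= Num.max (x d) (x' d))].

Definition ipf_stable_at (R : realType) (D : nat) (iscat : 'I_D -> bool)
    (dom : 'I_D -> set R) (A : Xspace R D -> probability (Xspace R D) R)
    (x a : Xspace R D) : Prop :=
  det_at A x a /\ forall w, Phi iscat dom x a w -> det_at A w a.

From HB Require Import structures.
From mathcomp Require Import all_boot all_order all_algebra.
Import Order.TTheory GRing.Theory Num.Theory.
From mathcomp Require Import all_classical all_reals all_analysis.
From mathcomp Require Import ring lra measurable_realfun.
Import numFieldNormedType.Exports.
Local Open Scope classical_set_scope.
Local Open Scope ring_scope.
Set Implicit Arguments.
Unset Strict Implicit.

(* Let a = A(x).  One step of partial fulfillment from a point w
   towards a lands on a point w' that lies "between" w and a in every
   feature, so the cost is additive along it: c(w,w') + c(w',a) = c(w,a).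
   Moreover w' stays in Phi(x,a), where IPF stability keeps A deterministic
   with target a.  Hence, by induction on the iteration budget T, for every
   w in Phi(x,a) and every prefix cost c >= 0, the expected value of
   c + (cost of the remaining path from w) is at most c + c(w,a): the
   algorithm's draw is a Dirac mass at a, the partial-fulfillment weights
   sum to 1, and each branch is bounded by the induction hypothesis combined
   with cost additivity. *)

Lemma dist_between (R : realType) (p q r : R) :
  (p <= q <= r) || (r <= q <= p) -> `|p - q| + `|q - r| = `|p - r|.
Proof.
case/orP=> /andP[pq qr].
- by rewrite !ler0_norm; lra.
- by rewrite !ger0_norm; lra.
Qed.

Lemma cost_ge0 (R : realType) (D : nat) (iscat : 'I_D -> bool)
    (F : 'I_D -> R -> R) (w a : Xspace R D) :
  0 <= cost iscat F w a.
Proof. by apply: sumr_ge0 => d _; rewrite /cost_d; case: ifP. Qed.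

Lemma seq_cost_ge0 (R : realType) (D : nat) (iscat : 'I_D -> bool)
    (F : 'I_D -> R -> R) (s : seq (Xspace R D)) :
  0 <= seq_cost iscat F s.
Proof.
elim: s => [|y s IH] //=; case: s IH => [|z s] IH //.
by rewrite addr_ge0 // cost_ge0.
Qed.

(* The partial-fulfillment weights are nonnegative and form a probability
   distribution on the subsets of categorical features (binomial expansion
   of the product of (u + (1 - u)) over the categorical features). *)
Lemma phi_w_ge0 (R : realType) (D : nat) (iscat : 'I_D -> bool) (u : R)
    (S : {set 'I_D}) :
  0 <= u <= 1 -> 0 <= phi_w iscat u S.
Proof. by move=> /andP[u0 u1]; rewrite /phi_w mulr_ge0 // exprn_ge0 // subr_ge0. Qed.

Lemma phi_w_sum1 (R : realType) (D : nat) (iscat : 'I_D -> bool) (u : R) :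
  \sum_(S in {set 'I_D} | S \subset cat_set iscat) phi_w iscat u S = 1.
Proof.
set C := cat_set iscat.
have := @bigA_distr R 0 1 *%R +%R _ (fun i => if i \in C then u else 0)
                   (fun i => if i \in C then 1 - u else 1).
have -> : \prod_i ((if i \in C then u else 0) + (if i \in C then 1 - u else 1))
          = 1 :> R.
  by apply: big1 => i _; case: ifP => _; rewrite ?add0r // addrC subrK.
move=> ->; rewrite [RHS](bigID (fun S : {set 'I_D} => S \subset C)) /=.
(* subsets that are not inside C contribute a factor 0 *)
rewrite [X in _ = _ + X]big1 ?addr0; last first.
  by move=> S /subsetPn [i iS iC]; rewrite (bigD1 i) //= iS (negbTE iC) mul0r.
apply: eq_bigr => S SC.
rewrite /phi_w (bigID (mem S)) /=.
rewrite (eq_bigr (fun=> u)); last first.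
  by move=> i iS; rewrite iS (fintype.subsetP SC i iS).
rewrite prodr_const; congr (_ * _).
rewrite (eq_bigr (fun i => if i \in C then 1 - u else 1)); last first.
  by move=> i /negbTE ->.
rewrite -big_mkcondr /= prodr_const.
have -> : (#|C| - #|S|)%N = #|C :\: S| by rewrite cardsD (finset.setIidPr SC).
by congr (_ ^+ _); apply: eq_card => i; rewrite finset.in_setD.
Qed.

(* A partial fulfillment from w towards a is featurewise between w and a,
   so (with nondecreasing F_d) the cost splits exactly along it. *)
Lemma cost_phi_split (R : realType) (D : nat) (iscat : 'I_D -> bool)
    (F : 'I_D -> R -> R) (eps u : R) (w a : Xspace R D) (S : {set 'I_D}) :
  (forall d, ~~ iscat d -> {homo F d : s t / s <= t}) -> 0 <= u <= 1 ->
  cost iscat F w (phi_pt iscat eps u w a S)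
    + cost iscat F (phi_pt iscat eps u w a S) a = cost iscat F w a.
Proof.
move=> Fmon /andP[u0 u1]; rewrite /cost -big_split /=; apply: eq_bigr => d _.
rewrite /cost_d /phi_pt; case cd: (iscat d).
  by case: (d \in S); rewrite eqxx ?addr0 ?add0r.
case: ifP => _; first by rewrite subrr normr0 addr0.
apply: dist_between; have Fm := Fmon d (negbT cd).
have [wa|aw] := leP (w d) (a d).
- have h1 : w d <= (1 - u) * w d + u * a d by nra.
  have h2 : (1 - u) * w d + u * a d <= a d by nra.
  by rewrite (Fm _ _ h1) (Fm _ _ h2).
- have h1 : (1 - u) * w d + u * a d <= w d by nra.
  have h2 : a d <= (1 - u) * w d + u * a d by nra.
  by rewrite (Fm _ _ h1) (Fm _ _ h2) orbT.
Qed.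

(* Phi(x,a) contains x and is closed under partial fulfillment towards a;
   this is what lets IPF stability be used at every step of the process. *)
Lemma Phi_refl (R : realType) (D : nat) (iscat : 'I_D -> bool)
    (dom : 'I_D -> set R) (x a : Xspace R D) :
  inX dom x -> Phi iscat dom x a x.
Proof.
move=> xX; split => // d; case: (iscat d); first by left.
by rewrite ge_min le_max !lexx.
Qed.

Lemma Phi_phi_pt (R : realType) (D : nat) (iscat : 'I_D -> bool)
    (dom : 'I_D -> set R) (eps u : R) (x a w : Xspace R D) (S : {set 'I_D}) :
  (forall d, ~~ iscat d -> forall s t r, dom d s -> dom d t -> 0 <= r <= 1 ->
       dom d ((1 - r) * s + r * t)) ->
  inX dom a -> 0 <= u <= 1 -> Phi iscat dom x a w ->
  Phi iscat dom x a (phi_pt iscat eps u w a S).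
Proof.
move=> hnum aX hu [wX wP]; split => d; rewrite /phi_pt.
  case cd: (iscat d); first by case: (d \in S); [exact: aX | exact: wX].
  by case: ifP => _; [exact: aX | apply: hnum; rewrite ?cd].
have := wP d; case: (iscat d); first by case: (d \in S) => //; right.
move=> /andP[wlo whi].
have alo : Num.min (x d) (a d) <= a d by rewrite ge_min lexx orbT.
have ahi : a d <= Num.max (x d) (a d) by rewrite le_max lexx orbT.
case: ifP => _; first by rewrite alo ahi.
move: hu => /andP[u0 u1].
set lo := Num.min _ _ in wlo alo *; set hi := Num.max _ _ in whi ahi *.
by apply/andP; split; nra.
Qed.

Import HBNNSimple.

Lemma dirac_integral_le d (T : measurableType d) (R : realType) (a : T)
    (f : T -> \bar R) :
  (forall x, (0 <= f x)%E) -> (\int[\d_a]_(x in setT) f x <= f a)%E.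
Proof.
move=> f0; rewrite ge0_integralTE //; apply: ge_ereal_sup => _ [h /= hf <-].
have := integral_nnsfun (\d_a) (@measurableT _ T) h.
rewrite patch_setT => <-.
rewrite integral_dirac //; last first.
  by apply/measurable_EFinP; exact: measurable_funPT.
by rewrite diracT mul1e; exact: hf.
Qed.

(* Under the hypotheses of the theorem every feature domain is measurable
   (finite or an interval), hence so is X itself. *)
Lemma dom_measurable (R : realType) (D : nat) (iscat : 'I_D -> bool)
    (dom : 'I_D -> set R) :
  (forall d, iscat d -> finite_set (dom d)) ->
  (forall d, ~~ iscat d -> forall s t r, dom d s -> dom d t -> 0 <= r <= 1 ->
       dom d ((1 - r) * s + r * t)) ->
  forall d, measurable (dom d).
Proof.
move=> hcat hnum d; case cd: (iscat d).
  apply: countable_measurable; first exact: measurable_set1.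
  exact: finite_set_countable (hcat d cd).
apply: is_interval_measurable => s t ds dt z /andP[sz zt].
have [s_eq_t|st] := eqVneq s t.
  by subst t; have -> : z = s by apply/le_anti; rewrite zt sz.
have lst : 0 < t - s by rewrite subr_gt0 lt_neqAle st (le_trans sz zt).
pose r := (z - s) / (t - s).
have -> : z = (1 - r) * s + r * t by rewrite /r; field; rewrite lt0r_neq0.
apply: hnum => //; first by rewrite cd.
apply/andP; split; first by apply: divr_ge0; [rewrite subr_ge0 | exact: ltW].
by rewrite ler_pdivrMr // mul1r lerD2r.
Qed.

Lemma inX_measurable (R : realType) (D : nat) (dom : 'I_D -> set R) :
  (forall d, measurable (dom d)) -> measurable (inX dom : set (Xspace R D)).
Proof.
move=> md.
have -> : inX dom
    = \bigcap_(d in [set: 'I_D]) ((fun x : Xspace R D => x d) @^-1` dom d).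
  by apply/seteqP; split => y /= h d; [move=> _; exact: h | exact: h d I].
apply: (@fin_bigcap_measurable _ (Xspace R D)); first exact: finite_finset.
by move=> d _; apply: sub_sigma_algebra; exists d, (dom d); split.
Qed.

Lemma det_target_inX (R : realType) (D : nat) (dom : 'I_D -> set R)
    (A : Xspace R D -> probability (Xspace R D) R) (x a : Xspace R D) :
  measurable (inX dom : set (Xspace R D)) -> A x (inX dom) = 1%E ->
  det_at A x a -> inX dom a.
Proof.
move=> mX AxX /(_ _ mX); rewrite AxX diracE.
case: (boolP (a \in inX dom)) => [/set_mem // | _].
by move/eqP; rewrite eqe oner_eq0.
Qed.

Section Process.
Variables (R : realType) (D : nat) (iscat : 'I_D -> bool) (eps u : R).
Variables (m : Xspace R D -> R) (A : Xspace R D -> probability (Xspace R D) R).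
Hypothesis u01 : 0 <= u <= 1.

Local Notation xi := (xi_expect iscat eps u m A).

Lemma xi_expect_ext T y (G1 G2 : seq (Xspace R D) -> \bar R) :
  (forall s, G1 (y :: s) = G2 (y :: s)) -> xi T y G1 = xi T y G2.
Proof.
move=> G12; case: T => [|T] /=; first exact: G12.
have -> : (fun s => G1 (y :: s)) = (fun s => G2 (y :: s)) by apply/funext.
by rewrite G12.
Qed.

Lemma xi_expect_ge0 T y (G : seq (Xspace R D) -> \bar R) :
  (forall s, (0 <= G s)%E) -> (0 <= xi T y G)%E.
Proof.
elim: T y G => [|T IH] y G G0 /=; first exact: G0.
case: ifP => _ //; apply: integral_ge0 => x' _.
apply: sume_ge0 => S _; apply: mule_ge0; first by rewrite lee_fin phi_w_ge0.
exact: IH.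
Qed.

Variables (F : 'I_D -> R -> R) (dom : 'I_D -> set R) (x a : Xspace R D).
Hypothesis F_mono : forall d, ~~ iscat d -> {homo F d : s t / s <= t}.
Hypothesis dom_interp : forall d, ~~ iscat d -> forall s t r,
  dom d s -> dom d t -> 0 <= r <= 1 -> dom d ((1 - r) * s + r * t).
Hypothesis a_inX : inX dom a.
Hypothesis stable : forall w, Phi iscat dom x a w -> det_at A w a.

Lemma shifted_cost_ge0 c (s : seq (Xspace R D)) :
  0 <= c -> (0 <= (c + seq_cost iscat F s)%:E)%E.
Proof. by move=> c0; rewrite lee_fin addr_ge0 // seq_cost_ge0. Qed.

Lemma xi_expect_cost_le T w c :
  Phi iscat dom x a w -> 0 <= c ->
  (xi T w (fun s => (c + seq_cost iscat F s)%:E) <= (c + cost iscat F w a)%:E)%E.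
Proof.
elim: T w c => [|T IH] w c wP c0.
  by rewrite /= lee_fin addr0 lerDl cost_ge0.
have path_cost_ge0 s : (0 <= (c + seq_cost iscat F (w :: s))%:E)%E.
  exact: shifted_cost_ge0.
rewrite /=.
case: ifP => _; last by rewrite lee_fin addr0 lerDl cost_ge0.
have branch_le S :
    (xi T (phi_pt iscat eps u w a S)
       (fun s => (c + seq_cost iscat F (w :: s))%:E)
     <= (c + cost iscat F w a)%:E)%E.
  rewrite (@xi_expect_ext _ _ _ (fun s =>
      ((c + cost iscat F w (phi_pt iscat eps u w a S)) + seq_cost iscat F s)%:E));
    last by move=> s /=; rewrite addrA.
  apply: le_trans (IH _ _ (Phi_phi_pt eps S dom_interp a_inX u01 wP) _) _.
    by rewrite addr_ge0 // cost_ge0.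
  by rewrite lee_fin -addrA (cost_phi_split eps w a S F_mono u01).
rewrite (eq_measure_integral (\d_a)); last by move=> S mS _; exact: stable.
apply: le_trans (dirac_integral_le a _) _.
  move=> x'; apply: sume_ge0 => S _; apply: mule_ge0.
    by rewrite lee_fin phi_w_ge0.
  by apply: xi_expect_ge0 => s; exact: path_cost_ge0.
apply: (@le_trans _ _ (\sum_(S in {set 'I_D} | S \subset cat_set iscat)
          ((phi_w iscat u S * (c + cost iscat F w a))%:E))).
  apply: lee_sum => S _; rewrite [X in (_ <= X)%E]EFinM; apply: lee_pmul => //.
  - by rewrite lee_fin phi_w_ge0.
  - by apply: xi_expect_ge0 => s; exact: path_cost_ge0.
by rewrite sumEFin lee_fin -mulr_suml phi_w_sum1 mul1r.
Qed.

End Process.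

Theorem theorem1 (R : realType) (D : nat) (iscat : 'I_D -> bool)
    (dom : 'I_D -> set R) (F : 'I_D -> R -> R) (eps : R)
    (m : Xspace R D -> R) (A : Xspace R D -> probability (Xspace R D) R)
    (x a : Xspace R D) (u : R) (T : nat) :
  (* categorical features: finite domains *)
  (forall d, iscat d -> finite_set (dom d)) ->
  (* numerical features: subsets of R closed under the interpolation of phi *)
  (forall d, ~~ iscat d -> forall s t r, dom d s -> dom d t -> 0 <= r <= 1 ->
       dom d ((1 - r) * s + r * t)) ->
  (* F_d is a cumulative distribution function for numerical d *)
  (forall d, ~~ iscat d -> is_cdf (F d)) ->
  0 <= eps ->
  (* m : X -> [0,1] *)
  (forall y, inX dom y -> 0 <= m y <= 1) ->
  (* A maps each point of X to a distribution over X *)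
  (forall y, inX dom y -> A y (inX dom) = 1%E) ->
  inX dom x ->
  (* A is IPF stable at x, and A(x) = a *)
  ipf_stable_at iscat dom A x a ->
  0 <= u <= 1 ->
  (xi_expect iscat eps u m A T x (fun s => (seq_cost iscat F s)%:E)
     <= (cost iscat F x a)%:E)%E.
Proof.
move=> hcat hnum hcdf _ _ hA xX [det_x det_Phi] hu.
have F_mono d : ~~ iscat d -> {homo F d : s t / s <= t}.
  by move=> cd; case: (hcdf d cd).
have mX := inX_measurable (dom_measurable hcat hnum).
have aX : inX dom a := det_target_inX mX (hA x xX) det_x.
have -> : (fun s => (seq_cost iscat F s)%:E)
          = (fun s => (0 + seq_cost iscat F s)%:E).
  by apply/funext => s; rewrite add0r.
have := xi_expect_cost_le eps m hu F_mono hnum aX det_Phi T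
  (Phi_refl iscat a xX) (lexx 0).
by rewrite add0r.
Qed.
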